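(* Let $\Gamma$ be a weighted digraph with vertex set $\{1,\dots,n\}$, $n>1$, without loops and with strictly positive arc weights, let $L$ be its Laplacian matrix, $d$ its in-forest dimension, and $\tilde J=\sigma_{n-d}^{-1}Q_{n-d}$ its normalized matrix of maximum in-forests. Then: (i) $L+\tilde J^{*}$ is nonsingular; (ii) $\operatorname{rank}L=n-\operatorname{rank}\tilde J=n-d$; (iii) $\mathcal N(L)=\mathcal R(\tilde J)$ and $\mathcal R(L)=\mathcal N(\tilde J)$; (iv) $\mathcal R(L)\cap\mathcal R(\tilde J)=\{\mathbf 0\}$; (v) $\operatorname{ind}L=1$; (vi) $\tilde J$ is the eigenprojection of $L$.
   Context: $W=(w_{ij})$ is the matrix of arc weights ($w_{ij}>0$ iff there is an arc $i\to j$, else $0$). The Laplacian $L=(\ell_{ij})$: $\ell_{ij}=-w_{ij}$ for $j\ne i$, $\ell_{ii}=\sum_{k\ne i}w_{ik}$. The weight of a subgraph is the product of its arc weights (1 if no arcs); the weight of a set of subgraphs is the sum of their weights. A converging tree is a weakly connected digraph with one vertex (the root) of outdegree 0 and all others of outdegree 1; an in-forest is a spanning subgraph of $\Gamma$ whose weak components are converging trees. The in-forest dimension $d$ is the minimal number of trees in an in-forest of $\Gamma$ (so in-forests have at most $n-d$ arcs). $\sigma_k$ is the total weight of in-forests with $k$ arcs; $Q_k=(q^k_{ij})$ with $q^k_{ij}$ the total weight of in-forests with $k$ arcs in which $i$ lies in a tree rooted at $j$. $A^*$ is the conjugate transpose, $\mathcal R(A)$ the range and $\mathcal N(A)$ the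 null space of $A$. The index $\operatorname{ind}A$ of a square matrix is the least $k\ge0$ with $\operatorname{rank}A^{k+1}=\operatorname{rank}A^k$. The eigenprojection of $A$ is the idempotent matrix $B$ with $\mathcal R(B)=\mathcal N(A^\nu)$ and $\mathcal N(B)=\mathcal R(A^\nu)$, where $\nu=\operatorname{ind}A$. *)

From HB Require Import structures.
From mathcomp Require Import all_boot all_order all_algebra.
Set Implicit Arguments. Unset Strict Implicit. Unset Printing Implicit Defensive.
Import Order.TTheory GRing.Theory Num.Theory.
Local Open Scope ring_scope.

Section Digraph.
Variables (R : realFieldType) (n : nat) (w : 'M[R]_n).

Definition laplacian : 'M[R]_n :=
  \matrix_(i, j) if i == j then \sum_(k | k != i) w i k else - w i j.

(* A spanning subgraph is given by its set of arcs (i, j), i.e. i -> j. *)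
Definition is_subgraph (F : {set 'I_n * 'I_n}) : bool :=
  [forall a in F, 0 < w a.1 a.2].

Definition outdeg (F : {set 'I_n * 'I_n}) (i : 'I_n) : nat :=
  #|[set j | (i, j) \in F]|.

Definition weak_rel (F : {set 'I_n * 'I_n}) : rel 'I_n :=
  fun x y => ((x, y) \in F) || ((y, x) \in F).

Definition wcomp (F : {set 'I_n * 'I_n}) (x : 'I_n) : {set 'I_n} :=
  [set y | connect (weak_rel F) x y].

Definition conv_tree (F : {set 'I_n * 'I_n}) (C : {set 'I_n}) : bool :=
  [exists r in C, (outdeg F r == 0)%N &&
     [forall y in C, (y != r) ==> (outdeg F y == 1)%N]].

Definition is_inforest (F : {set 'I_n * 'I_n}) : bool :=
  is_subgraph F && [forall x, conv_tree F (wcomp F x)].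

Definition ntrees (F : {set 'I_n * 'I_n}) : nat :=
  #|[set wcomp F x | x : 'I_n]|.

Definition inforest_dim : nat :=
  \big[minn/n]_(F : {set 'I_n * 'I_n} | is_inforest F) ntrees F.

Definition weight (F : {set 'I_n * 'I_n}) : R := \prod_(a in F) w a.1 a.2.

Definition sigma (k : nat) : R :=
  \sum_(F : {set 'I_n * 'I_n} | is_inforest F && (#|F| == k)%N) weight F.

Definition rooted_at (F : {set 'I_n * 'I_n}) (i j : 'I_n) : bool :=
  (j \in wcomp F i) && (outdeg F j == 0)%N.

Definition Qmat (k : nat) : 'M[R]_n :=
  \matrix_(i, j) \sum_(F : {set 'I_n * 'I_n} |
                     [&& is_inforest F, #|F| == k & rooted_at F i j]) weight F.

Definition Jtilde : 'M[R]_n :=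
  (sigma (n - inforest_dim))^-1 *: Qmat (n - inforest_dim).

End Digraph.

(* Range (column space) and null space of a square matrix, as MathComp
   row-space matrices: R(A) is spanned by the rows of A^T, and
   N(A) = { x | A x = 0 } corresponds to kermx A^T (u *m A^T = 0). *)
Definition range {R : fieldType} {n : nat} (A : 'M[R]_n) : 'M[R]_n := A^T.
Definition nullsp {R : fieldType} {n : nat} (A : 'M[R]_n) : 'M[R]_n := kermx A^T.

Definition is_index {R : fieldType} {n : nat} (A : 'M[R]_n) (k : nat) : Prop :=
  \rank (A ^+ k.+1) = \rank (A ^+ k) /\
  forall j, (j < k)%N -> \rank (A ^+ j.+1) <> \rank (A ^+ j).

Definition is_eigenprojection {R : fieldType} {n : nat} (A B : 'M[R]_n) : Prop :=
  exists nu, is_index A nu /\ B * B = B /\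
    (range B == nullsp (A ^+ nu))%MS /\ (nullsp B == range (A ^+ nu))%MS.

(* Grafting the root i of an in-forest onto a vertex p outside its own tree is a
   bijection from the pairs (in-forest with k arcs in which i is a root, such p)
   onto the in-forests with k + 1 arcs in which i is not a root; summing over it
   gives the matrix-forest identity L Q_k = sigma_(k+1) I - Q_(k+1).  For
   K = n - d there is no in-forest with K + 1 arcs and every in-forest with K arcs
   has d trees, so L J = 0, tr J = d and J + L P = I with P = Q_(K-1) / sigma_K
   (P = 0 if K = 0).
   The rest is linear algebra of such a pair: L = L^2 P gives rank L^2 = rank L,
   hence N(L^2) = N(L) and J L = 0, so J is idempotent with range N(L) and null
   space R(L).  Over the reals, (L + J^T) x = 0 forces L x = 0 = J^T x by a sum of
   squares argument, and then x lies in N(L) = R(J), so x = 0. *)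

From HB Require Import structures.
From mathcomp Require Import all_boot all_order all_algebra.
From mathcomp Require Import zify.
Set Implicit Arguments. Unset Strict Implicit. Unset Printing Implicit Defensive.
Import Order.TTheory GRing.Theory Num.Theory.
Local Open Scope ring_scope.

Lemma mxtrace_idem (F : fieldType) n (B : 'M[F]_n) :
  B *m B = B -> \tr B = (\rank B)%:R.
Proof.
move=> BB; have := mulmx_base B; have := row_base_free B; have := col_base_full B.
move: (col_base B) (row_base B) => C D C_full D_free CD.
have DC : D *m C = 1%:M.
  have C_free : row_free C^T by rewrite /row_free mxrank_tr.
  apply: trmx_inj; apply: (row_free_inj C_free); rewrite /= -!trmx_mul; congr (_^T).
  apply: (row_free_inj D_free).
  by rewrite mulmx1 CD mulmxA CD -mulmxA CD BB.
by rewrite -{1}CD mxtrace_mulC DC mxtrace1.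
Qed.

Lemma mulmx_trmx_eq0 (R : realFieldType) n (y : 'rV[R]_n) : y *m y^T = 0 -> y = 0.
Proof.
move=> /(congr1 (fun M : 'M_1 => M 0 0)); rewrite !mxE => yy0.
have sq_ge0 i : true -> 0 <= y 0 i * y^T i 0 by rewrite mxE -expr2 sqr_ge0.
apply/rowP => j; have /eqP := psumr_eq0P sq_ge0 yy0 (i := j) isT.
by rewrite !mxE mulf_eq0 orbb => /eqP.
Qed.

(* A pair L J = 0, J + L P = 1 transposed to A = L^T, B = J^T, so that [range] and
   [nullsp] of L and J become the row spaces A, B, [kermx A] and [kermx B]. *)
Section IndexOneComplement.
Variables (F : fieldType) (n : nat) (A B P : 'M[F]_n).
Hypotheses (BA0 : B *m A = 0) (BPA1 : B + P *m A = 1%:M).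

Lemma mxrank_sqr_compl : \rank (A *m A) = \rank A.
Proof.
have AE : A = P *m (A *m A).
  by rewrite mulmxA -[A in LHS]mul1mx -BPA1 mulmxDl BA0 add0r.
by apply/eqP; rewrite eqn_leq mxrankM_maxl {1}AE mxrankM_maxr.
Qed.

Lemma kermx_sqr_compl : (kermx (A *m A) <= kermx A)%MS.
Proof.
have sub : (kermx A <= kermx (A *m A))%MS.
  by rewrite sub_kermx mulmxA mulmx_ker mul0mx.
have := (mxrank_leqif_eq sub).2.
by rewrite !mxrank_ker mxrank_sqr_compl eqxx => /esym/andP[].
Qed.

Lemma mulmx_compl0 : A *m B = 0.
Proof.
have ABE : A *m B = (1%:M - A *m P) *m A.
  by rewrite -[B](addrK (P *m A)) BPA1 mulmxBr mulmxBl mulmx1 mul1mx mulmxA.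
rewrite ABE; apply/sub_kermxP; apply: submx_trans kermx_sqr_compl.
by rewrite sub_kermx mulmxA -ABE -mulmxA BA0 mulmx0.
Qed.

Lemma mulmx_compl_idem : B *m B = B.
Proof.
by rewrite -{1}[B](addrK (P *m A)) BPA1 mulmxBl mul1mx -mulmxA mulmx_compl0 mulmx0 subr0.
Qed.

Lemma mxrank_compl : (\rank B + \rank A)%N = n.
Proof.
have B_ker : (B <= kermx A)%MS by rewrite sub_kermx BA0.
have le_n : (n <= \rank B + \rank A)%N.
  rewrite -{1}(mxrank1 F n) -BPA1 (leq_trans (mxrank_add _ _)) // leq_add2l.
  exact: mxrankM_maxr.
have := mxrankS B_ker; rewrite mxrank_ker; have := rank_leq_col A; lia.
Qed.

Lemma kermx_compl : (kermx A == B)%MS.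
Proof.
have B_ker : (B <= kermx A)%MS by rewrite sub_kermx BA0.
have rankB : \rank B = (n - \rank A)%N by have := mxrank_compl; lia.
have := (mxrank_leqif_eq B_ker).2.
by rewrite mxrank_ker -rankB eqxx => /esym/andP[_ ker_B]; apply/andP.
Qed.

Lemma kermx_compl_r : (kermx B == A)%MS.
Proof.
apply/andP; split; last by rewrite sub_kermx mulmx_compl0.
have ->: kermx B = kermx B *m P *m A.
  by rewrite -mulmxA -[LHS]mulmx1 -BPA1 mulmxDr mulmx_ker add0r.
exact: submxMl.
Qed.

Lemma capmx_compl : (A :&: B == (0 : 'M_n))%MS.
Proof.
apply/andP; split; last exact: sub0mx.
rewrite submx0.
have [D DE] := submxP (capmxSr A B).
have capB0 : (A :&: B)%MS *m B = 0.
  by apply/sub_kermxP; rewrite (submx_trans (capmxSl A B)) // sub_kermx mulmx_compl0.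
by rewrite DE -mulmx_compl_idem mulmxA -DE capB0.
Qed.

End IndexOneComplement.

Lemma unitmx_compl_add_tr (R : realFieldType) n (A B P : 'M[R]_n) :
  B *m A = 0 -> B + P *m A = 1%:M -> (A + B^T) \in unitmx.
Proof.
move=> BA0 BPA1; rewrite -row_free_unit; apply: inj_row_free => v vAB0.
have vAE : v *m A = - (v *m B^T) by apply/eqP; rewrite -addr_eq0 -mulmxDr vAB0.
have vA0 : v *m A = 0.
  apply: mulmx_trmx_eq0; rewrite {2}vAE linearN /= trmx_mul trmxK mulmxN.
  by rewrite -!mulmxA (mulmxA A) (mulmx_compl0 BA0 BPA1) mul0mx mulmx0 oppr0.
have vB0 : v *m B^T = 0 by rewrite -[LHS]opprK -vAE vA0 oppr0.
have /submxP[x vE] : (v <= B)%MS.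
  have /andP[kerA_B _] := kermx_compl BA0 BPA1.
  by apply: submx_trans kerA_B; rewrite sub_kermx vA0.
apply: mulmx_trmx_eq0.
by rewrite {1}vE -mulmxA -[B *m v^T]trmxK trmx_mul trmxK vB0 trmx0 mulmx0.
Qed.

Lemma sum_antisym (V : comRingType) (I : finType) (P : pred I) (c a : I -> V) :
  \sum_(p | P p) \sum_(m | P m) c p * c m * (a p - a m) = 0.
Proof.
transitivity (\sum_(p | P p) \sum_(m | P m) c p * c m * a p -
              \sum_(p | P p) \sum_(m | P m) c p * c m * a m).
  rewrite -sumrB; apply: eq_bigr => p _; rewrite -sumrB.
  by apply: eq_bigr => m _; rewrite mulrBr.
rewrite [X in _ - X]exchange_big /=; apply/eqP; rewrite subr_eq0; apply/eqP.
by apply: eq_bigr => p _; apply: eq_bigr => m _; rewrite (mulrC (c p)).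
Qed.

Section IterAgree.
Variables (T : finType) (f : T -> T).

Lemma iter_card_fix x y : fconnect f x y -> f y = y -> iter #|T| f x = y.
Proof.
move=> xy fy; have le_card : (findex f x y <= #|T|)%N.
  exact: leq_trans (ltnW (findex_max xy)) (max_card _).
by rewrite -(subnK le_card) iterD iter_findex // iter_fix.
Qed.

Variables (g : T -> T) (i : T).
Hypothesis gf : forall x, x != i -> g x = f x.

Lemma iter_agree_avoid x :
  (forall m, iter m f x != i) -> forall m, iter m g x = iter m f x.
Proof. by move=> avoid; elim=> // m IHm; rewrite !iterS IHm gf. Qed.

Lemma fconnect_agree_hit m x : iter m f x = i -> fconnect g x i.
Proof.
elim: m x => [|m IHm] x; first by move=> /= ->; exact: connect0.
rewrite iterSr => hit; have [-> | x_i] := eqVneq x i; first exact: connect0.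
by apply: connect_trans (fconnect1 g x) _; rewrite gf //; apply: IHm.
Qed.

End IterAgree.

Section InForests.
Variables (R : realFieldType) (n : nat) (w : 'M[R]_n).

Local Notation arcs := {set 'I_n * 'I_n}.
Implicit Types (F G : arcs) (i j p u v x y : 'I_n).

Definition parent F v : 'I_n := odflt v [pick u | (v, u) \in F].
Definition is_root F v := (outdeg F v == 0)%N.
Definition roots F := [set v | is_root F v].
Definition root_of F v := iter n (parent F) v.

Definition is_forest F :=
  [&& is_subgraph w F, [forall v, (outdeg F v <= 1)%N]
    & [forall v, is_root F (root_of F v)]].

Lemma subgraph_pos F a b : is_subgraph w F -> (a, b) \in F -> 0 < w a b.
Proof. by move=> /forallP /(_ (a, b)) /implyP. Qed.

Lemma is_rootP F v : reflect (forall u, (v, u) \notin F) (is_root F v).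
Proof.
rewrite /is_root /outdeg cards_eq0; apply: (iffP eqP) => [vF0 u|noarc].
  by apply/negP => vu; have := in_set0 u; rewrite -vF0 inE vu.
by apply/setP => u; rewrite !inE; apply/negbTE.
Qed.

Lemma parent_root F v : is_root F v -> parent F v = v.
Proof.
move/is_rootP => noarc; rewrite /parent; case: pickP => //= u vu.
by have := noarc u; rewrite vu.
Qed.

Lemma parent_in F v : ~~ is_root F v -> (v, parent F v) \in F.
Proof.
move=> nroot; rewrite /parent; case: pickP => //= noarc.
by case/negP: nroot; apply/is_rootP => u; rewrite noarc.
Qed.

Lemma parent_arc F v u : (outdeg F v <= 1)%N -> (v, u) \in F -> parent F v = u.
Proof.
move=> deg1 vu; have nroot : ~~ is_root F v by apply/is_rootP => /(_ u); rewrite vu.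
move/card_le1_eqP: deg1 => /(_ (parent F v) u); rewrite !inE.
by move/(_ (parent_in nroot) vu).
Qed.

Lemma root_of_fconnect F v t : fconnect (parent F) v t -> is_root F t -> root_of F v = t.
Proof.
move=> vt t_root; have := iter_card_fix vt (parent_root t_root).
by rewrite card_ord.
Qed.

Lemma root_of_iter F m v : is_root F (iter m (parent F) v) ->
  root_of F v = iter m (parent F) v.
Proof. by apply: root_of_fconnect; exact: fconnect_iter. Qed.

Lemma root_of_root F v : is_root F v -> root_of F v = v.
Proof. exact: (@root_of_iter F 0). Qed.

Lemma is_forestP F : is_forest F ->
  [/\ is_subgraph w F, forall v, (outdeg F v <= 1)%N
    & forall v, is_root F (root_of F v)].
Proof. by case/and3P => sub /forallP deg /forallP rt. Qed.

Section Forest.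
Variable F : arcs.
Hypothesis forestF : is_forest F.

Lemma is_root_root_of v : is_root F (root_of F v).
Proof. by case/is_forestP: forestF. Qed.

Lemma root_of_idem v : root_of F (root_of F v) = root_of F v.
Proof. exact/root_of_root/is_root_root_of. Qed.

Lemma root_of_parent v : root_of F (parent F v) = root_of F v.
Proof.
by rewrite /root_of -iterSr iterS -/(root_of F v) parent_root ?is_root_root_of.
Qed.

Lemma root_of_arc a b : (a, b) \in F -> root_of F b = root_of F a.
Proof.
by case/is_forestP: forestF => _ deg _ ab; rewrite -(parent_arc (deg a) ab) root_of_parent.
Qed.

Lemma wcompE x : wcomp F x = [set y | root_of F y == root_of F x].
Proof.
have to_root z : connect (weak_rel F) z (root_of F z).
  apply: connect_sub (fconnect_iter _ n z) => a b /eqP <-.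
  have [a_root | a_nroot] := boolP (is_root F a); first by rewrite parent_root.
  by apply: connect1; rewrite /weak_rel parent_in.
have weak_sym : connect_sym (weak_rel F).
  by apply: sym_connect_sym => a b; rewrite /weak_rel orbC.
apply/setP => y; rewrite !inE; apply/idP/eqP => [xy | xy_root].
  have closed_root : closed (weak_rel F) [pred z | root_of F z == root_of F x].
    by move=> a b /orP[] ab; rewrite !inE /= (root_of_arc ab).
  by have := closed_connect closed_root xy; rewrite !inE eqxx => /esym/eqP.
by apply: connect_trans (to_root x) _; rewrite -xy_root weak_sym to_root.
Qed.

Lemma rooted_atE i j : rooted_at F i j = (root_of F i == j).
Proof.
rewrite /rooted_at wcompE inE; apply/andP/eqP => [[/eqP <- /root_of_root //]|<-].
by rewrite root_of_idem; split=> //; exact: is_root_root_of.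
Qed.

Lemma ntreesE : ntrees F = #|roots F|.
Proof.
rewrite /ntrees.
have -> : [set wcomp F x | x : 'I_n] = [set wcomp F r | r in roots F].
  apply/setP => S; apply/imsetP/imsetP => [[x _ ->]|[r _ ->]]; last by exists r.
  exists (root_of F x); first by rewrite inE is_root_root_of.
  by rewrite !wcompE root_of_idem.
rewrite card_in_imset // => r1 r2; rewrite !inE => /root_of_root r1E /root_of_root r2E.
by move/setP/(_ r1); rewrite !wcompE !inE r1E r2E eqxx => /esym/eqP.
Qed.

Lemma card_forest_roots : (#|F| + #|roots F|)%N = n.
Proof.
case/is_forestP: forestF => _ deg _.
have cardF : #|F| = (\sum_v outdeg F v)%N.
  rewrite -sum1_card (partition_big fst xpredT) //=; apply: eq_bigr => v _.
  rewrite /outdeg -sum1_card (reindex (pair v)) /=; last first.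
    by exists snd => [u _ | [a b] /andP[_ /eqP <-]].
  by apply: eq_bigl => u; rewrite inE eqxx andbT.
rewrite cardF -sum1_card [X in (_ + X)%N]big_mkcond -big_split -[RHS]card_ord.
rewrite -sum1_card; apply: eq_bigr => v _; rewrite inE /is_root.
by have := deg v; case: (outdeg F v) => [|[|]].
Qed.

End Forest.

Lemma inforest_outdeg F v : is_inforest w F -> (outdeg F v <= 1)%N.
Proof.
case/andP => _ /forallP /(_ v) /existsP[r /and3P[_ /eqP r0 /forallP deg1]].
have [-> | v_r] := eqVneq v r; first by rewrite r0.
by have := deg1 v; rewrite /wcomp inE connect0 v_r => /eqP ->.
Qed.

Lemma is_inforest_forest F : is_inforest w F -> is_forest F.
Proof.
move=> inF; have deg v := inforest_outdeg v inF.
case/andP: inF => sub /forallP conv; apply/and3P; split=> //; first exact/forallP.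
have closed_root : closed (weak_rel F) [pred z | is_root F (root_of F z)].
  have arc x y : (x, y) \in F -> is_root F (root_of F x) = is_root F (root_of F y).
    move=> xy; rewrite -(parent_arc (deg x) xy) /root_of -iterSr.
    apply/idP/idP => [x_root | Sx_root]; first by rewrite iterS parent_root.
    by rewrite -/(root_of F x) (root_of_iter Sx_root).
  by move=> a b /orP[] ab; rewrite !inE (arc _ _ ab).
apply/forallP => v; case/existsP: (conv v) => r /and3P[+ /eqP r0 _]; rewrite inE => vr.
have := closed_connect closed_root vr; rewrite !inE /= => ->.
by rewrite root_of_root /is_root r0.
Qed.

Lemma is_forest_inforest F : is_forest F -> is_inforest w F.
Proof.
move=> forestF; case/is_forestP: (forestF) => sub deg _.
apply/andP; split=> //; apply/forallP => x; rewrite wcompE //.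
apply/existsP; exists (root_of F x); rewrite inE root_of_idem // eqxx /=.
apply/andP; split; first exact: is_root_root_of.
apply/forallP => y; rewrite inE; apply/implyP => /eqP yx; apply/implyP => y_r.
have y_nroot : ~~ is_root F y by apply: contra y_r => /root_of_root <-; rewrite yx.
by move: y_nroot; rewrite /is_root; have := deg y; case: (outdeg F y) => [|[|]].
Qed.

Lemma is_inforestE F : is_inforest w F = is_forest F.
Proof. by apply/idP/idP; [exact: is_inforest_forest | exact: is_forest_inforest]. Qed.

Section Graft.
Variables (F : arcs) (i p : 'I_n).
Hypothesis i_root : is_root F i.

Lemma notin_graft : (i, p) \notin F.
Proof. exact: is_rootP i_root p. Qed.

Lemma parent_graft v : parent ((i, p) |: F) v = if v == i then p else parent F v.
Proof.
move/is_rootP: i_root => noarc; rewrite /parent; case: eqP => [->|/eqP v_i].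
  case: pickP => [u /= | /(_ p)]; last by rewrite in_setU1 eqxx.
  by rewrite in_setU1 xpair_eqE eqxx /= (negbTE (noarc u)) orbF => /eqP.
by congr odflt; apply: eq_pick => u /=; rewrite in_setU1 xpair_eqE (negbTE v_i).
Qed.

Lemma outdeg_graft v : outdeg ((i, p) |: F) v = if v == i then 1%N else outdeg F v.
Proof.
rewrite /outdeg; case: eqP => [->|/eqP v_i].
  rewrite -(cards1 p); apply: eq_card => u; rewrite !inE xpair_eqE eqxx /=.
  by move/is_rootP: i_root => /(_ u) /negbTE ->; rewrite orbF.
by apply: eq_card => u; rewrite !inE xpair_eqE (negbTE v_i).
Qed.

Lemma is_root_graft v : is_root ((i, p) |: F) v = (v != i) && is_root F v.
Proof. by rewrite /is_root outdeg_graft; case: (v =P i). Qed.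

Lemma card_graft : #|(i, p) |: F| = #|F|.+1.
Proof. by rewrite cardsU1 notin_graft. Qed.

Lemma weight_graft : weight w ((i, p) |: F) = w i p * weight w F.
Proof. by rewrite /weight big_setU1 ?notin_graft. Qed.

Lemma iter_parent_avoid x : root_of F x != i -> forall m, iter m (parent F) x != i.
Proof.
move=> x_i m; apply: contra x_i => /eqP hit; apply/eqP.
by rewrite (@root_of_iter F m) hit.
Qed.

Hypotheses (forestF : is_forest F) (p_tree : root_of F p != i).

Lemma root_of_graft v :
  root_of ((i, p) |: F) v = if root_of F v == i then root_of F p else root_of F v.
Proof.
set G := (i, p) |: F.
have parentGF x : x != i -> parent G x = parent F x by rewrite parent_graft => /negbTE ->.
have avoid x : root_of F x != i -> root_of G x = root_of F x.
  by move/iter_parent_avoid/iter_agree_avoid => /(_ _ parentGF); apply.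
case: eqP => [v_i | /eqP]; last exact: avoid.
apply: root_of_fconnect; last by rewrite is_root_graft p_tree is_root_root_of.
apply: connect_trans (fconnect_agree_hit parentGF v_i) _.
apply: connect_trans (fconnect1 _ i) _; rewrite parent_graft eqxx -avoid //.
exact: fconnect_iter.
Qed.

Lemma is_forest_graft : 0 < w i p -> is_forest ((i, p) |: F).
Proof.
case/is_forestP: forestF => sub deg _ w_ip; apply/and3P; split.
- apply/forallP => -[a b]; apply/implyP; rewrite in_setU1 => /predU1P[[-> ->] //|].
  exact: subgraph_pos.
- by apply/forallP => v; rewrite outdeg_graft; case: eqP.
- apply/forallP => v; rewrite root_of_graft is_root_graft.
  by case: ifP => [_ | ->]; rewrite ?p_tree (is_root_root_of forestF).
Qed.

End Graft.

Section Prune.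
Variables (G : arcs) (i : 'I_n).
Hypotheses (forestG : is_forest G) (i_nroot : ~~ is_root G i).
Let p := parent G i.
Let F := G :\ (i, p).

Lemma graft_prune : (i, p) |: F = G.
Proof. exact/setD1K/parent_in. Qed.

Lemma weight_parent_pos : 0 < w i p.
Proof. by case/is_forestP: forestG => sub _ _; apply: subgraph_pos sub (parent_in _). Qed.

Lemma is_root_sub_prune v : is_root G v -> is_root F v.
Proof.
by move=> /is_rootP v_root; apply/is_rootP => u; rewrite in_setD1 negb_and v_root orbT.
Qed.

Lemma is_root_prune : is_root F i.
Proof.
case/is_forestP: forestG => _ deg _; apply/is_rootP => u.
rewrite in_setD1 xpair_eqE eqxx /=; apply/negP => /andP[u_p iu].
by move: u_p; rewrite /p (parent_arc (deg i) iu) eqxx.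
Qed.

Lemma parent_prune x : x != i -> parent F x = parent G x.
Proof.
move=> x_i; rewrite /parent; congr odflt; apply: eq_pick => u /=.
by rewrite in_setD1 xpair_eqE (negbTE x_i).
Qed.

Lemma root_of_prune v : ~~ fconnect (parent G) v i -> root_of F v = root_of G v.
Proof.
move=> v_ni; apply: (iter_agree_avoid parent_prune) => m.
by apply: contra v_ni => /eqP <-; exact: fconnect_iter.
Qed.

Lemma is_forest_prune : is_forest F.
Proof.
case/is_forestP: forestG => sub deg _; apply/and3P; split.
- apply/forallP => a; apply/implyP; rewrite in_setD1 => /andP[_].
  exact: (implyP (forallP sub a)).
- apply/forallP => v; apply: leq_trans (deg v); apply: subset_leq_card.
  by apply/subsetP => u; rewrite !inE => /andP[].
- apply/forallP => v; have [/iter_findex vi | v_ni] := boolP (fconnect (parent G) v i).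
    have := fconnect_agree_hit parent_prune vi.
    by move/root_of_fconnect/(_ is_root_prune)->; exact: is_root_prune.
  by rewrite root_of_prune // is_root_sub_prune // is_root_root_of.
Qed.

Lemma root_of_prune_parent : root_of F p != i.
Proof.
(* Otherwise i lies on a cycle of [parent G] and is its own root. *)
have [p_i | p_ni] := boolP (fconnect (parent G) p i); last first.
  rewrite root_of_prune //; apply: contraNneq p_ni => <-; exact: fconnect_iter.
case/negP: i_nroot; set k := findex (parent G) p i.
have cyc m : iter (m * k.+1) (parent G) i = i.
  by elim: m => // m IHm; rewrite mulSn iterD IHm iterSr iter_findex.
have le_n : (n <= n * k.+1)%N by rewrite leq_pmulr.
rewrite -(cyc n) -(subnK le_n) iterD -/(root_of G i) iter_fix ?is_root_root_of //.
exact/parent_root/is_root_root_of.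
Qed.

End Prune.

Definition forests k := [pred F | is_forest F && (#|F| == k)].
Definition can_graft F i p := (0 < w i p) && (root_of F p != i).

Lemma sum_nonroot_forests (V : nmodType) k i (f : arcs -> V) :
  \sum_(G | forests k.+1 G && ~~ is_root G i) f G =
  \sum_(F | forests k F && is_root F i) \sum_(p | can_graft F i p) f ((i, p) |: F).
Proof.
rewrite pair_big_dep /= (reindex_onto (fun Fp : arcs * 'I_n => (i, Fp.2) |: Fp.1)
   (fun G => (G :\ (i, parent G i), parent G i))) /=; last first.
  by move=> G /andP[/andP[forestG _] i_nroot]; rewrite graft_prune.
apply: eq_bigl => -[F p] /=; apply/idP/idP.
  case/andP=> /andP[/andP[forestG /eqP cardG] i_nroot] /eqP[FE pE].
  move: (is_forest_prune i forestG) (is_root_prune i forestG).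
  move: (root_of_prune_parent forestG i_nroot) (weight_parent_pos forestG i_nroot).
  rewrite /forests /can_graft /= FE pE => p_tree w_ip -> i_root.
  by move: cardG; rewrite i_root w_ip p_tree card_graft // => -[->]; rewrite eqxx.
case/andP=> /andP[/andP[forestF /eqP cardF] i_root] /andP[w_ip p_tree].
rewrite /forests /= is_forest_graft // card_graft // cardF eqxx is_root_graft //.
by rewrite eqxx /= parent_graft // eqxx setU1K ?notin_graft.
Qed.

Lemma QmatE k i j :
  Qmat w k i j = \sum_(F | forests k F) weight w F * (root_of F i == j)%:R.
Proof.
rewrite mxE big_mkcond [RHS]big_mkcond; apply: eq_bigr => F _.
rewrite /forests inE is_inforestE; case forestF: (is_forest F) => //=.
rewrite rooted_atE //.
by case: (#|F| == k); case: (root_of F i == j); rewrite ?mulr1 ?mulr0.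
Qed.

Lemma sigmaE k : sigma w k = \sum_(F | forests k F) weight w F.
Proof. by apply: eq_bigl => F; rewrite is_inforestE. Qed.

Lemma laplacian_row_sum i (x : 'I_n -> R) :
  \sum_m laplacian w i m * x m = \sum_m w i m * (x i - x m).
Proof.
rewrite (bigD1 i) //= [RHS](bigD1 i) //= subrr mulr0 add0r mxE eqxx mulr_suml.
rewrite -big_split /=; apply: eq_bigr => m m_i.
by rewrite mxE eq_sym (negbTE m_i) mulrBr mulNr.
Qed.

Section Recurrence.
Hypothesis w_ge0 : forall i j, 0 <= w i j.
Variables (k : nat) (i j : 'I_n).

Let ind F v : R := (root_of F v == j)%:R.
Let drift F := \sum_m w i m * (ind F i - ind F m).

Lemma sum_can_graft F (h : 'I_n -> R) : (forall m, root_of F m = i -> h m = 0) ->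
  \sum_m w i m * h m = \sum_(p | can_graft F i p) w i p * h p.
Proof.
move=> h0; rewrite [RHS]big_mkcond; apply: eq_bigr => m _ /=.
case: ifP => // /nandP[|/negPn/eqP/h0->]; last by rewrite mulr0.
by rewrite lt_def w_ge0 andbT negbK => /eqP ->; rewrite mul0r.
Qed.

Lemma laplacian_Qmat_drift :
  \sum_m laplacian w i m * Qmat w k m j = \sum_(F | forests k F) weight w F * drift F.
Proof.
rewrite laplacian_row_sum; under eq_bigr => m _ do rewrite !QmatE -sumrB mulr_sumr.
rewrite exchange_big /=; apply: eq_bigr => F _; rewrite mulr_sumr.
by apply: eq_bigr => m _; rewrite -!mulrBr mulrCA.
Qed.

Lemma drift_nonroot : \sum_(F | forests k F && ~~ is_root F i) weight w F * drift F = 0.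
Proof.
case: k => [|k'].
  apply: big_pred0 => F; apply/negP => /andP[/andP[_ /eqP/cards0_eq ->]].
  by apply/negP/negPn/is_rootP => u; rewrite in_set0.
rewrite sum_nonroot_forests; apply: big1 => F /andP[/andP[forestF _] i_root].
(* Summed over the grafted parent p, the terms w_ip w_im (ind p - ind m) cancel in pairs. *)
transitivity (weight w F * \sum_(p | can_graft F i p) \sum_(m | can_graft F i m)
    w i p * w i m * (ind F p - ind F m)); last by rewrite sum_antisym mulr0.
rewrite mulr_sumr; apply: eq_bigr => p /andP[w_ip p_tree].
rewrite weight_graft // /drift (@sum_can_graft F); last first.
  by move=> m m_i; rewrite /ind !root_of_graft // m_i eqxx root_of_root // eqxx subrr.
rewrite -mulrA mulrCA; congr (_ * _); rewrite mulr_sumr.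
apply: eq_bigr => m /andP[_ m_tree].
by rewrite /ind !root_of_graft // (negbTE m_tree) root_of_root // eqxx mulrA.
Qed.

Lemma drift_root : \sum_(F | forests k F && is_root F i) weight w F * drift F =
  sigma w k.+1 * (i == j)%:R - Qmat w k.+1 i j.
Proof.
rewrite sigmaE QmatE mulr_suml -sumrB [RHS](bigID (fun G => is_root G i)) /=.
rewrite [X in _ = X + _]big1 ?add0r => [|G /andP[_ i_root]]; last first.
  by rewrite root_of_root // -mulrBr subrr mulr0.
rewrite sum_nonroot_forests; apply: eq_bigr => F /andP[/andP[forestF _] i_root].
rewrite /drift (@sum_can_graft F) => [|m m_i]; last first.
  by rewrite /ind m_i root_of_root // subrr.
rewrite mulr_sumr; apply: eq_bigr => p /andP[w_ip p_tree].
rewrite weight_graft // /ind root_of_graft // root_of_root // eqxx.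
by rewrite -mulrBr mulrCA mulrA.
Qed.

End Recurrence.

Lemma mulmx_laplacian_Qmat (w_ge0 : forall i j, 0 <= w i j) k :
  laplacian w *m Qmat w k = (sigma w k.+1)%:M - Qmat w k.+1.
Proof.
apply/matrixP => i j.
have -> : ((sigma w k.+1)%:M - Qmat w k.+1) i j =
    sigma w k.+1 * (i == j)%:R - Qmat w k.+1 i j by rewrite !mxE mulr_natr.
rewrite mxE laplacian_Qmat_drift (bigID (fun F => is_root F i)).
by rewrite drift_root // drift_nonroot //= addr0.
Qed.

Lemma is_forest0 : is_forest set0.
Proof.
apply/and3P; split; first by apply/forallP => a; rewrite in_set0.
  apply/forallP => v; rewrite /outdeg (eq_card (B := pred0)) ?card0 // => u.
  by rewrite !inE.
by apply/forallP => v; apply/is_rootP => u; rewrite in_set0.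
Qed.

Lemma forests0 F : forests 0 F = (F == set0).
Proof.
rewrite /forests inE cards_eq0; apply/andP/eqP => [[_ /eqP] // | ->].
by rewrite is_forest0 eqxx.
Qed.

Lemma Qmat0 : Qmat w 0 = (sigma w 0)%:M.
Proof.
apply/matrixP => i j; rewrite QmatE sigmaE mxE !(big_pred1 set0 forests0).
by rewrite root_of_root ?mulr_natr //; apply/is_rootP => u; rewrite in_set0.
Qed.

Lemma inforest_dim_le F : is_forest F -> (inforest_dim w <= #|roots F|)%N.
Proof.
move=> forestF; rewrite -ntreesE //.
by apply: (@bigmin_le_cond _ nat); rewrite is_inforestE.
Qed.

Lemma inforest_dim_attained : exists2 F, is_forest F & #|roots F| = inforest_dim w.
Proof.
have ntrees_le F : is_inforest w F -> (ntrees F <= n)%N.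
  move=> _; apply: leq_trans (leq_imset_card _ _) _.
  exact: leq_trans (max_card _) (eq_leq (card_ord n)).
have inforest0 : is_inforest w set0 by rewrite is_inforestE is_forest0.
have := @bigmin_eq_arg _ nat _ n set0 _ _ inforest0 ntrees_le.
case: arg_minP => // F; rewrite is_inforestE => forestF _ dimE.
by exists F => //; rewrite -ntreesE // -dimE.
Qed.

Lemma inforest_dim_le_n : (inforest_dim w <= n)%N.
Proof.
have [F forestF <-] := inforest_dim_attained.
by have := card_forest_roots forestF; lia.
Qed.

Lemma inforest_dim_gt0 : (0 < n)%N -> (0 < inforest_dim w)%N.
Proof.
move=> n_gt0; have [F forestF <-] := inforest_dim_attained.
by apply/card_gt0P; exists (root_of F (Ordinal n_gt0)); rewrite inE is_root_root_of.
Qed.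

Section MaxForests.
Hypothesis w_ge0 : forall i j, 0 <= w i j.
Local Notation d := (inforest_dim w).

Lemma card_forest_le F : is_forest F -> (#|F| <= n - d)%N.
Proof.
move=> forestF; have := card_forest_roots forestF; have := inforest_dim_le forestF.
lia.
Qed.

Lemma roots_max_forest F : is_forest F -> #|F| = (n - d)%N -> #|roots F| = d.
Proof.
move=> forestF; have := card_forest_roots forestF; have := inforest_dim_le_n.
lia.
Qed.

Lemma forests_max_succ F : forests (n - d)%N.+1 F = false.
Proof.
by apply/negP => /andP[/card_forest_le + /eqP cardF]; rewrite cardF ltnn.
Qed.

Lemma sigma_max_succ : sigma w (n - d)%N.+1 = 0.
Proof. by rewrite sigmaE big_pred0 // => F; rewrite forests_max_succ. Qed.

Lemma Qmat_max_succ : Qmat w (n - d)%N.+1 = 0.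
Proof.
by apply/matrixP => i j; rewrite QmatE mxE big_pred0 // => F; rewrite forests_max_succ.
Qed.

Lemma sigma_max_gt0 : 0 < sigma w (n - d)%N.
Proof.
have [F forestF rootsF] := inforest_dim_attained.
have maxF : forests (n - d)%N F.
  rewrite /forests inE forestF /=; have := card_forest_roots forestF.
  by rewrite rootsF => /(congr1 (subn^~ d)); rewrite addnK => ->.
rewrite sigmaE (bigD1 F) //= ltr_wpDr ?sumr_ge0 // => [G _|].
  by apply: prodr_ge0 => a _; exact: w_ge0.
apply: prodr_gt0 => -[a b] ab; apply: subgraph_pos ab.
by case/is_forestP: forestF.
Qed.

Lemma mxtrace_Qmat_max : \tr (Qmat w (n - d)%N) = d%:R * sigma w (n - d)%N.
Proof.
rewrite /mxtrace; under eq_bigr => v _ do rewrite QmatE.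
rewrite exchange_big sigmaE mulr_sumr; apply: eq_bigr => F /andP[forestF /eqP cardF].
rewrite -mulr_sumr mulrC -(roots_max_forest forestF cardF); congr (_ * _).
rewrite -sum1_card natr_sum [RHS]big_mkcond; apply: eq_bigr => v _; rewrite inE.
have [v_root | v_nroot] := boolP (is_root F v); first by rewrite root_of_root // eqxx.
by case: eqP => // vE; case/negP: v_nroot; rewrite -vE is_root_root_of.
Qed.

Lemma mulmx_laplacian_Jtilde : laplacian w *m Jtilde w = 0.
Proof.
rewrite /Jtilde -scalemxAr mulmx_laplacian_Qmat // sigma_max_succ Qmat_max_succ.
by rewrite subr0 raddf0 scaler0.
Qed.

Lemma Jtilde_compl : exists P, Jtilde w + laplacian w *m P = 1%:M.
Proof.
have sigma_neq0 : sigma w (n - d)%N != 0 by rewrite gt_eqF ?sigma_max_gt0.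
rewrite /Jtilde; case: (n - d)%N sigma_neq0 => [|k] sigma_neq0.
  by exists 0; rewrite Qmat0 mulmx0 addr0 scale_scalar_mx mulVf.
exists ((sigma w k.+1)^-1 *: Qmat w k); rewrite -scalemxAr -scalerDr.
by rewrite mulmx_laplacian_Qmat // addrC subrK scale_scalar_mx mulVf.
Qed.

Lemma mxtrace_Jtilde : \tr (Jtilde w) = d%:R.
Proof.
by rewrite mxtraceZ mxtrace_Qmat_max mulrCA mulVf ?mulr1 // gt_eqF ?sigma_max_gt0.
Qed.

End MaxForests.

End InForests.

Lemma is_index1 (F : fieldType) n (L : 'M[F]_n) :
  \rank (L *m L) = \rank L -> (\rank L < n)%N -> is_index L 1.
Proof.
move=> rankLL rankL_lt; split; first by rewrite expr2 expr1 -mulmxE.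
move=> j; rewrite ltnS leqn0 => /eqP -> /=; rewrite expr1 expr0 mxrank1.
by apply/eqP; rewrite ltn_eqF.
Qed.

Theorem proposition12 (R : realFieldType) (n : nat) (w : 'M[R]_n)
  (hn : (1 < n)%N)
  (hloop : forall i, w i i = 0)
  (hpos : forall i j, 0 <= w i j) :
  let L := laplacian w in
  let J := Jtilde w in
  let d := inforest_dim w in
  let Z : 'M[R]_n := 0 in
  (* (i)   *) (L + J^T) \in unitmx /\
  (* (ii)  *) (\rank L = (n - \rank J)%N /\ (n - \rank J)%N = (n - d)%N) /\
  (* (iii) *) ((nullsp L == range J)%MS /\ (range L == nullsp J)%MS) /\
  (* (iv)  *) (range L :&: range J == Z)%MS /\
  (* (v)   *) is_index L 1 /\
  (* (vi)  *) is_eigenprojection L J.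
Proof.
move=> L J d Z; have [P JLP1] := Jtilde_compl hpos.
have BA0 : J^T *m L^T = 0 by rewrite -trmx_mul mulmx_laplacian_Jtilde ?trmx0.
have BPA1 : J^T + P^T *m L^T = 1%:M by rewrite -trmx_mul -linearD /= JLP1 trmx1.
have rankJ : \rank J = d.
  apply/eqP; rewrite -(eqr_nat R) -(mxtrace_Jtilde hpos) -mxrank_tr -mxtrace_tr.
  by rewrite mxtrace_idem // (mulmx_compl_idem BA0 BPA1).
have rankL : \rank L = (n - d)%N.
  by have := mxrank_compl BA0 BPA1; rewrite !mxrank_tr rankJ; lia.
have d_gt0 := inforest_dim_gt0 w (ltnW hn).
have index1 : is_index L 1.
  apply: is_index1; last by rewrite rankL; have := inforest_dim_le_n w; lia.
  by rewrite -mxrank_tr trmx_mul (mxrank_sqr_compl BA0 BPA1) mxrank_tr.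
have kerL := kermx_compl BA0 BPA1; have kerJ := kermx_compl_r BA0 BPA1.
split; first by rewrite -unitmx_tr linearD /=; exact: (unitmx_compl_add_tr BA0 BPA1).
split; first by rewrite rankL rankJ.
split; first by split; [exact: kerL | rewrite andbC; exact: kerJ].
split; first exact: capmx_compl BA0 BPA1.
split=> //; exists 1%N; split=> //; rewrite expr1; split.
  by apply: trmx_inj; rewrite -mulmxE trmx_mul (mulmx_compl_idem BA0 BPA1).
by split; [rewrite andbC; exact: kerL | exact: kerJ].
Qed.
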